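(* Let $\mathbb{C}$ be a semi-abelian action accessible category, and let $X\xrightarrow{\kappa} A \underset{\beta}{\overset{\alpha}{\rightleftarrows}} B$ be a split extension in the category of internal reflexive graphs in $\mathbb{C}$. Then there exists a largest sub-reflexive-graph $\tilde B$ of $B$ such that $[{}_*\tilde B, X_*]=0=[\tilde B_*,{}_*X]$ in $\mathbb{C}$ (Huq commutators of subobjects of the underlying object of $A$, via $\kappa$ and $\beta$).
   Context: Semi-abelian: pointed, finitely complete and cocomplete, Barr-exact, Bourn-protomodular. A reflexive graph in $\mathbb{C}$ is a triple $(G,s,t)$ with $s,t\colon G\to G$, $st=t$, $ts=s$; morphisms are maps of underlying objects commuting with $s$ and $t$. A sub-reflexive-graph is a subobject in this category. For a reflexive graph $G$, ${}_*G$ denotes the kernel of $s$ and $G_*$ the kernel of $t$, as subobjects of $G$. A split extension is a diagram $X\xrightarrow{\kappa}A\rightleftarrows B$ with $\alpha\beta=1_B$ and $\kappa$ the kernel of $\alpha$. Two morphisms $f\colon P\to C$, $g\colon Q\to C$ commute (Huq) if there is $c\colon P\times Q\to C$ with $c(1,0)=f$, $c(0,1)=g$; the Huq commutator $[P,Q]$ of two subobjects of $C$ is the smallest normal subobject of $C$ such that the images of $P,Q$ in the quotient commute. A split extension with kernel $X$ is faithful if every split extension with kernel $X$ admits at most one morphism to it that is the identity on $X$; $\mathbb{C}$ is action accessible if every split extension with kernel $X$ admits a morphism (identity on $X$) to a faithful one. *)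

Set Implicit Arguments.
Unset Strict Implicit.

Record Cat := {
  ob :> Type;
  hom : ob -> ob -> Type;
  comp : forall a b c : ob, hom b c -> hom a b -> hom a c;
  idm : forall a : ob, hom a a;
  comp_assoc : forall a b c d (f : hom a b) (g : hom b c) (h : hom c d),
      comp h (comp g f) = comp (comp h g) f;
  comp_id_l : forall a b (f : hom a b), comp (idm b) f = f;
  comp_id_r : forall a b (f : hom a b), comp f (idm a) = f
}.
Arguments hom {c} _ _ : rename.
Arguments comp {c a b c0} _ _ : rename.
Arguments idm {c} a : rename.

Notation "g ∘ f" := (comp g f) (at level 40, left associativity).

Section CatDefs.
Variable C : Cat.

Definition is_iso {a b : C} (f : hom a b) : Prop :=
  exists g : hom b a, g ∘ f = idm a /\ f ∘ g = idm b.

Definition mono {a b : C} (f : hom a b) : Prop :=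
  forall (x : C) (g h : hom x a), f ∘ g = f ∘ h -> g = h.

Definition is_initial (I : C) : Prop :=
  forall x : C, exists f : hom I x, forall g : hom I x, g = f.
Definition is_terminal (T : C) : Prop :=
  forall x : C, exists f : hom x T, forall g : hom x T, g = f.
Definition is_zero (Z : C) : Prop := is_initial Z /\ is_terminal Z.

Definition pointed : Prop := exists Z : C, is_zero Z.

Definition zm {a b : C} (f : hom a b) : Prop :=
  exists (Z : C) (u : hom a Z) (v : hom Z b), is_zero Z /\ f = v ∘ u.

Definition is_pullback {P A B D : C} (p1 : hom P A) (p2 : hom P B)
    (f : hom A D) (g : hom B D) : Prop :=
  f ∘ p1 = g ∘ p2 /\
  forall (Q : C) (q1 : hom Q A) (q2 : hom Q B), f ∘ q1 = g ∘ q2 ->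
    exists u : hom Q P, p1 ∘ u = q1 /\ p2 ∘ u = q2 /\
      forall u' : hom Q P, p1 ∘ u' = q1 -> p2 ∘ u' = q2 -> u' = u.

Definition is_pushout {D A B P : C} (f : hom D A) (g : hom D B)
    (i1 : hom A P) (i2 : hom B P) : Prop :=
  i1 ∘ f = i2 ∘ g /\
  forall (Q : C) (q1 : hom A Q) (q2 : hom B Q), q1 ∘ f = q2 ∘ g ->
    exists u : hom P Q, u ∘ i1 = q1 /\ u ∘ i2 = q2 /\
      forall u' : hom P Q, u' ∘ i1 = q1 -> u' ∘ i2 = q2 -> u' = u.

Definition is_product {P Q PQ : C} (p1 : hom PQ P) (p2 : hom PQ Q) : Prop :=
  forall (Y : C) (f : hom Y P) (g : hom Y Q),
    exists u : hom Y PQ, p1 ∘ u = f /\ p2 ∘ u = g /\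
      forall u' : hom Y PQ, p1 ∘ u' = f -> p2 ∘ u' = g -> u' = u.

Definition finitely_complete : Prop :=
  (exists T : C, is_terminal T) /\
  forall (A B D : C) (f : hom A D) (g : hom B D),
    exists (P : C) (p1 : hom P A) (p2 : hom P B), is_pullback p1 p2 f g.

Definition finitely_cocomplete : Prop :=
  (exists I : C, is_initial I) /\
  forall (D A B : C) (f : hom D A) (g : hom D B),
    exists (P : C) (i1 : hom A P) (i2 : hom B P), is_pushout f g i1 i2.

Definition is_coequalizer {A B Q : C} (f g : hom A B) (q : hom B Q) : Prop :=
  q ∘ f = q ∘ g /\
  forall (Y : C) (h : hom B Y), h ∘ f = h ∘ g ->
    exists u : hom Q Y, u ∘ q = h /\ forall u' : hom Q Y, u' ∘ q = h -> u' = u.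

Definition regular_epi {B Q : C} (e : hom B Q) : Prop :=
  exists (A : C) (f g : hom A B), is_coequalizer f g e.

Definition regular : Prop :=
  (forall (A B P : C) (f : hom A B) (p1 p2 : hom P A), is_pullback p1 p2 f f ->
     exists (Q : C) (q : hom A Q), is_coequalizer p1 p2 q) /\
  (forall (A B D P : C) (e : hom A D) (g : hom B D) (p1 : hom P A) (p2 : hom P B),
     regular_epi e -> is_pullback p1 p2 e g -> regular_epi p2).

Definition jointly_monic {R A : C} (r1 r2 : hom R A) : Prop :=
  forall (Y : C) (g h : hom Y R), r1 ∘ g = r1 ∘ h -> r2 ∘ g = r2 ∘ h -> g = h.

Definition equivalence_relation {R A : C} (r1 r2 : hom R A) : Prop :=
  jointly_monic r1 r2 /\
  (exists d : hom A R, r1 ∘ d = idm A /\ r2 ∘ d = idm A) /\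
  (exists s : hom R R, r1 ∘ s = r2 /\ r2 ∘ s = r1) /\
  (forall (P : C) (p1 p2 : hom P R), is_pullback p1 p2 r2 r1 ->
     exists t : hom P R, r1 ∘ t = r1 ∘ p1 /\ r2 ∘ t = r2 ∘ p2).

Definition barr_exact : Prop :=
  regular /\
  forall (R A : C) (r1 r2 : hom R A), equivalence_relation r1 r2 ->
    exists (D : C) (f : hom A D), is_pullback r1 r2 f f.

Definition is_kernel {K A B : C} (k : hom K A) (f : hom A B) : Prop :=
  zm (f ∘ k) /\
  forall (Y : C) (g : hom Y A), zm (f ∘ g) ->
    exists u : hom Y K, k ∘ u = g /\ forall u' : hom Y K, k ∘ u' = g -> u' = u.

Definition is_cokernel {A B Q : C} (q : hom B Q) (f : hom A B) : Prop :=
  zm (q ∘ f) /\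
  forall (Y : C) (g : hom B Y), zm (g ∘ f) ->
    exists u : hom Q Y, u ∘ q = g /\ forall u' : hom Q Y, u' ∘ q = g -> u' = u.

Definition split_ext {X A B : C} (k : hom X A) (a : hom A B) (b : hom B A) : Prop :=
  a ∘ b = idm B /\ is_kernel k a.

(* (pointed) Bourn protomodularity: the split short five lemma *)
Definition protomodular : Prop :=
  forall (X A B X' A' B' : C) (k : hom X A) (a : hom A B) (b : hom B A)
    (k' : hom X' A') (a' : hom A' B') (b' : hom B' A')
    (u : hom X X') (v : hom A A') (w : hom B B'),
    split_ext k a b -> split_ext k' a' b' ->
    v ∘ k = k' ∘ u -> a' ∘ v = w ∘ a -> v ∘ b = b' ∘ w ->
    is_iso u -> is_iso w -> is_iso v.

Definition semi_abelian : Prop :=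
  pointed /\ finitely_complete /\ finitely_cocomplete /\ barr_exact /\ protomodular.

Definition ext_mor {X A B A' B' : C} (k : hom X A) (a : hom A B) (b : hom B A)
    (k' : hom X A') (a' : hom A' B') (b' : hom B' A')
    (v : hom A A') (w : hom B B') : Prop :=
  v ∘ k = k' /\ a' ∘ v = w ∘ a /\ v ∘ b = b' ∘ w.

Definition faithful_split_ext {X A' B' : C} (k' : hom X A') (a' : hom A' B')
    (b' : hom B' A') : Prop :=
  split_ext k' a' b' /\
  forall (A B : C) (k : hom X A) (a : hom A B) (b : hom B A),
    split_ext k a b ->
    forall (v v2 : hom A A') (w w2 : hom B B'),
      ext_mor k a b k' a' b' v w -> ext_mor k a b k' a' b' v2 w2 ->
      v = v2 /\ w = w2.

Definition action_accessible : Prop :=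
  forall (X A B : C) (k : hom X A) (a : hom A B) (b : hom B A),
    split_ext k a b ->
    exists (A' B' : C) (k' : hom X A') (a' : hom A' B') (b' : hom B' A')
      (v : hom A A') (w : hom B B'),
      faithful_split_ext k' a' b' /\ ext_mor k a b k' a' b' v w.

Definition huq_commute {P Q D : C} (f : hom P D) (g : hom Q D) : Prop :=
  exists (PQ : C) (p1 : hom PQ P) (p2 : hom PQ Q) (i1 : hom P PQ) (i2 : hom Q PQ)
    (c : hom PQ D),
    is_product p1 p2 /\
    p1 ∘ i1 = idm P /\ zm (p2 ∘ i1) /\ zm (p1 ∘ i2) /\ p2 ∘ i2 = idm Q /\
    c ∘ i1 = f /\ c ∘ i2 = g.

Definition normal_mono {N D : C} (n : hom N D) : Prop :=
  mono n /\ exists (E : C) (f : hom D E), is_kernel n f.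

Definition quot_commute {P Q N D : C} (p : hom P D) (q : hom Q D) (n : hom N D)
  : Prop :=
  forall (E : C) (c : hom D E), is_cokernel c n -> huq_commute (c ∘ p) (c ∘ q).

Definition is_huq_commutator {P Q N D : C} (p : hom P D) (q : hom Q D)
    (n : hom N D) : Prop :=
  normal_mono n /\ quot_commute p q n /\
  forall (N' : C) (n' : hom N' D), normal_mono n' -> quot_commute p q n' ->
    exists h : hom N N', n' ∘ h = n.

Definition huq_zero {P Q D : C} (p : hom P D) (q : hom Q D) : Prop :=
  exists (Z : C) (n : hom Z D), is_zero Z /\ is_huq_commutator p q n.

Record RG := {
  rg_ob : ob C;
  rg_s : hom rg_ob rg_ob;
  rg_t : hom rg_ob rg_ob;
  rg_st : rg_s ∘ rg_t = rg_t;
  rg_ts : rg_t ∘ rg_s = rg_s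
}.

Record rgHom (G H : RG) := {
  rgmap :> hom (rg_ob G) (rg_ob H);
  rgmap_s : rgmap ∘ rg_s G = rg_s H ∘ rgmap;
  rgmap_t : rgmap ∘ rg_t G = rg_t H ∘ rgmap
}.

(* kernels in the category of reflexive graphs (zero morphisms there are
   exactly those whose underlying morphism is zero) *)
Definition rg_kernel {X A B : RG} (k : rgHom X A) (a : rgHom A B) : Prop :=
  zm (rgmap a ∘ rgmap k) /\
  forall (Y : RG) (g : rgHom Y A), zm (rgmap a ∘ rgmap g) ->
    exists u : rgHom Y X, rgmap k ∘ rgmap u = rgmap g /\
      forall u' : rgHom Y X, rgmap k ∘ rgmap u' = rgmap g -> rgmap u' = rgmap u.

Definition rg_split_ext {X A B : RG} (k : rgHom X A) (a : rgHom A B)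
    (b : rgHom B A) : Prop :=
  rgmap a ∘ rgmap b = idm (rg_ob B) /\ rg_kernel k a.

Definition rg_mono {G H : RG} (m : rgHom G H) : Prop :=
  forall (Y : RG) (g h : rgHom Y G),
    rgmap m ∘ rgmap g = rgmap m ∘ rgmap h -> rgmap g = rgmap h.

(* for a sub-reflexive-graph m : Bt >-> B, with B embedded into A by b and
   X embedded into A by k:
   [ _*Bt , X_* ] = 0 = [ Bt_* , _*X ]  in C.
   _*G = kernel of s, G_* = kernel of t. *)
Definition comm_condition {X A B : RG} (k : rgHom X A) (b : rgHom B A)
    {Bt : RG} (m : rgHom Bt B) : Prop :=
  (forall (K1 K2 : C) (k1 : hom K1 (rg_ob Bt)) (k2 : hom K2 (rg_ob X)),
     is_kernel k1 (rg_s Bt) -> is_kernel k2 (rg_t X) ->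
     huq_zero (rgmap b ∘ rgmap m ∘ k1) (rgmap k ∘ k2)) /\
  (forall (K1 K2 : C) (k1 : hom K1 (rg_ob Bt)) (k2 : hom K2 (rg_ob X)),
     is_kernel k1 (rg_t Bt) -> is_kernel k2 (rg_s X) ->
     huq_zero (rgmap b ∘ rgmap m ∘ k1) (rgmap k ∘ k2)).

End CatDefs.

(* By action accessibility, the centralizer of the kernel [X] of a split extension
   is the kernel of the comparison map [w : B -> B'] to a faithful extension:
   [b ∘ f] commutes with [X] iff [w ∘ f = 0].  Applied to the restrictions of the
   extension to the kernels of [t] and of [s] on [X], this yields maps [w1], [w2]
   out of [B].  Since the kernel and the image of an idempotent are jointly epic
   (protomodularity), a sub-reflexive-graph [m] of [B] satisfies the two commutator
   conditions exactly when [w1 ∘ m = w1 ∘ s ∘ m] and [w2 ∘ m = w2 ∘ t ∘ m].  The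
   joint equalizer of these two pairs is closed under [s] and [t], and is the
   largest such sub-reflexive-graph. *)

From Stdlib Require Import Setoid.
Set Implicit Arguments.
Unset Strict Implicit.

Lemma comp_eq_postcomp {C : Cat} {a b c d : C} {g : hom b c} {f : hom a b} {h : hom a c} :
  g ∘ f = h -> forall x : hom c d, x ∘ g ∘ f = x ∘ h.
Proof. intros H x. rewrite <- comp_assoc, H. reflexivity. Qed.

(* Composites are kept left-associated; [comp_rewrite H] rewrites [H : g ∘ f = h]
   also inside a longer left-associated composite [x ∘ g ∘ f]. *)
Ltac comp_norm := rewrite ?comp_assoc, ?comp_id_l, ?comp_id_r.
Ltac comp_rewrite H := first [rewrite H | rewrite (comp_eq_postcomp H)]; comp_norm.

Section Morphisms.
Variable C : Cat.

Lemma zm_comp_l {a b c : C} {f : hom a b} (g : hom b c) : zm f -> zm (g ∘ f).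
Proof.
  intros (Z & u & v & HZ & ->). exists Z, u, (g ∘ v). split; auto. apply comp_assoc.
Qed.

Lemma zm_comp_r {a b c : C} {f : hom a b} (g : hom c a) : zm f -> zm (f ∘ g).
Proof.
  intros (Z & u & v & HZ & ->). exists Z, (u ∘ g), v. split; auto.
  symmetry; apply comp_assoc.
Qed.

Lemma zm_unique {a b : C} {f g : hom a b} : zm f -> zm g -> f = g.
Proof.
  intros (Z & u & v & [HZi _] & ->) (Z' & u' & v' & [_ HZt'] & ->).
  destruct (HZi Z') as [j _]. destruct (HZi b) as [z Hz]. destruct (HZt' a) as [y Hy].
  rewrite (Hz v), <- (Hz (v' ∘ j)), <- comp_assoc, (Hy u'), <- (Hy (j ∘ u)).
  reflexivity.
Qed.

Lemma zm_from_zero {Z b : C} (f : hom Z b) : is_zero Z -> zm f.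
Proof. intros HZ. exists Z, (idm Z), f. split; auto. symmetry; apply comp_id_r. Qed.

Lemma idm_iso (a : C) : is_iso (idm a).
Proof. exists (idm a). split; apply comp_id_l. Qed.

Lemma mono_comp {a b c : C} {f : hom a b} {g : hom b c} : mono f -> mono g -> mono (g ∘ f).
Proof. intros Hf Hg x u v E. apply Hf, Hg. rewrite !comp_assoc. exact E. Qed.

Lemma kernel_mono {K A B : C} {k : hom K A} {f : hom A B} : is_kernel k f -> mono k.
Proof.
  intros [Hzk H] x g h E. destruct (H x (k ∘ g)) as [u [_ Hu]].
  { rewrite comp_assoc. apply zm_comp_r; auto. }
  rewrite (Hu g eq_refl), (Hu h (eq_sym E)). reflexivity.
Qed.

Lemma kernel_factor {K A B Y : C} {k : hom K A} {f : hom A B} {g : hom Y A} :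
  is_kernel k f -> zm (f ∘ g) -> exists u, k ∘ u = g.
Proof. intros [_ H] Hg. destruct (H Y g Hg) as [u [Hu _]]. eauto. Qed.

Definition is_equalizer {a b e : C} (f g : hom a b) (m : hom e a) : Prop :=
  f ∘ m = g ∘ m /\ mono m /\ forall Y (y : hom Y a), f ∘ y = g ∘ y -> exists u, m ∘ u = y.

Lemma product_uniq {PQ P Q Y : C} {p1 : hom PQ P} {p2 : hom PQ Q} (H : is_product p1 p2)
  {u v : hom Y PQ} : p1 ∘ u = p1 ∘ v -> p2 ∘ u = p2 ∘ v -> u = v.
Proof.
  intros E1 E2. destruct (H Y (p1 ∘ v) (p2 ∘ v)) as (w & _ & _ & Hw).
  rewrite (Hw u E1 E2), (Hw v eq_refl eq_refl). reflexivity.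
Qed.

Section Limits.
Hypotheses (HP : pointed C) (HF : finitely_complete C).

Lemma zm_exists (a b : C) : exists f : hom a b, zm f.
Proof.
  destruct HP as [Z [HZi HZt]]. destruct (HZi b) as [v _]. destruct (HZt a) as [u _].
  exists (v ∘ u), Z, u, v. split; [split|]; auto.
Qed.

Lemma mono_zm {a b c : C} {m : hom b c} {f : hom a b} : mono m -> zm (m ∘ f) -> zm f.
Proof.
  intros Hm H. destruct (zm_exists a b) as [z Hz].
  replace f with z; auto. apply Hm, zm_unique; auto. apply zm_comp_l; auto.
Qed.


Lemma kernel_exists {A B : C} (f : hom A B) : exists K (k : hom K A), is_kernel k f.
Proof.
  destruct HP as [Z HZ]. pose proof HZ as [HZi HZt]. destruct (HZi B) as [z _].
  destruct HF as [_ HPB]. destruct (HPB A Z B f z) as (P & p1 & p2 & E & HU).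
  exists P, p1. split.
  - rewrite E. apply zm_comp_r, zm_from_zero; auto.
  - intros Y g Hg. destruct (HZt Y) as [y Hy].
    destruct (HU Y g y) as (u & Hu & _ & Huniq).
    { apply zm_unique; auto. apply zm_comp_r, zm_from_zero; auto. }
    exists u. split; auto.
Qed.

Lemma product_exists (P Q : C) :
  exists PQ (p1 : hom PQ P) (p2 : hom PQ Q), is_product p1 p2.
Proof.
  destruct HF as [[T HT] HPB]. destruct (HT P) as [tp _]. destruct (HT Q) as [tq _].
  destruct (HPB P Q T tp tq) as (PQ & p1 & p2 & _ & HU).
  exists PQ, p1, p2. intros Y f g. apply HU.
  destruct (HT Y) as [ty Hty]. rewrite (Hty (tp ∘ f)), (Hty (tq ∘ g)). reflexivity.
Qed.

Lemma product_with_injections (P Q : C) :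
  exists PQ (p1 : hom PQ P) (p2 : hom PQ Q) (i1 : hom P PQ) (i2 : hom Q PQ),
    is_product p1 p2 /\
    p1 ∘ i1 = idm P /\ zm (p2 ∘ i1) /\ zm (p1 ∘ i2) /\ p2 ∘ i2 = idm Q.
Proof.
  destruct (product_exists P Q) as (PQ & p1 & p2 & Hp).
  destruct (zm_exists P Q) as [z1 Hz1]. destruct (zm_exists Q P) as [z2 Hz2].
  destruct (Hp P (idm P) z1) as (i1 & H11 & H21 & _).
  destruct (Hp Q z2 (idm Q)) as (i2 & H12 & H22 & _).
  exists PQ, p1, p2, i1, i2. rewrite H21, H12. auto.
Qed.

Lemma equalizer_exists {a b : C} (f g : hom a b) : exists e (m : hom e a), is_equalizer f g m.
Proof.
  destruct (product_exists a b) as (AB & q1 & q2 & Hq).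
  destruct (Hq a (idm a) f) as (hf & Hf1 & Hf2 & _).
  destruct (Hq a (idm a) g) as (hg & Hg1 & Hg2 & _).
  destruct HF as [_ HPB]. destruct (HPB a a AB hf hg) as (P & p1 & p2 & E & HU).
  assert (E12 : p1 = p2).
  { assert (X : q1 ∘ hf ∘ p1 = q1 ∘ hg ∘ p2) by (rewrite <- !comp_assoc, E; reflexivity).
    rewrite Hf1, Hg1, !comp_id_l in X. exact X. }
  subst p2.
  exists P, p1. split; [|split].
  - rewrite <- Hf2, <- Hg2, <- !comp_assoc, E. reflexivity.
  - intros x u v Euv. destruct (HU x (p1 ∘ v) (p1 ∘ v)) as (w & _ & _ & Hw).
    { rewrite !comp_assoc, E. reflexivity. }
    rewrite (Hw u), (Hw v); auto.
  - intros Y y Hy. destruct (HU Y y y) as (w & Hw & _).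
    { apply (product_uniq Hq); comp_norm;
        rewrite ?Hf1, ?Hg1, ?Hf2, ?Hg2; comp_norm; auto. }
    eauto.
Qed.

Lemma joint_equalizer_exists {a b c : C} (f g : hom a b) (f' g' : hom a c) :
  exists e (m : hom e a), mono m /\ f ∘ m = g ∘ m /\ f' ∘ m = g' ∘ m /\
    forall Y (y : hom Y a), f ∘ y = g ∘ y -> f' ∘ y = g' ∘ y -> exists u, m ∘ u = y.
Proof.
  destruct (equalizer_exists f g) as (e1 & m1 & E1 & Hm1 & Hu1).
  destruct (equalizer_exists (f' ∘ m1) (g' ∘ m1)) as (e2 & m2 & E2 & Hm2 & Hu2).
  exists e2, (m1 ∘ m2). split; [|split; [|split]].
  - apply mono_comp; auto.
  - rewrite !comp_assoc, E1. reflexivity.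
  - rewrite !comp_assoc. exact E2.
  - intros Y y Hy Hy'. destruct (Hu1 Y y Hy) as [y1 <-].
    destruct (Hu2 Y y1) as [y2 <-]; [rewrite <- !comp_assoc; exact Hy'|].
    exists y2. symmetry; apply comp_assoc.
Qed.

End Limits.
End Morphisms.

Section Protomodular.
Variable C : Cat.
Hypotheses (HP : pointed C) (HF : finitely_complete C) (HPM : protomodular C).

Lemma split_ext_of_mono {X A B E : C} {k : hom X A} {a : hom A B} {b : hom B A}
  {e : hom E A} {kE : hom X E} {bE : hom B E} :
  split_ext k a b -> mono e -> e ∘ kE = k -> e ∘ bE = b -> split_ext kE (a ∘ e) bE.
Proof.
  intros [Hab Hk] He HkE HbE. split; [rewrite <- comp_assoc, HbE; exact Hab|]. split.
  - rewrite <- comp_assoc, HkE. apply Hk.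
  - intros Y y Hy. destruct (kernel_factor (g := e ∘ y) Hk) as [u Hu].
    { rewrite comp_assoc. exact Hy. }
    exists u. split.
    + apply He. rewrite comp_assoc, HkE. exact Hu.
    + intros u' Hu'. apply (kernel_mono Hk). rewrite Hu, <- Hu', comp_assoc, HkE.
      reflexivity.
Qed.

Lemma split_ext_mono_iso {X A B E : C} {k : hom X A} {a : hom A B} {b : hom B A}
  {e : hom E A} {kE : hom X E} {bE : hom B E} :
  split_ext k a b -> mono e -> e ∘ kE = k -> e ∘ bE = b -> is_iso e.
Proof.
  intros Hs He HkE HbE.
  apply (HPM (u := idm X) (w := idm B) (split_ext_of_mono Hs He HkE HbE) Hs);
    comp_norm; auto using idm_iso.
Qed.

Lemma split_ext_jointly_epic {X A B Z : C} {k : hom X A} {a : hom A B} {b : hom B A}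
  {f g : hom A Z} (Hs : split_ext k a b) : f ∘ k = g ∘ k -> f ∘ b = g ∘ b -> f = g.
Proof.
  intros Ek Eb.
  destruct (equalizer_exists HF f g) as (E & e & He & Hm & Hfac).
  destruct (Hfac _ k Ek) as [kE HkE]. destruct (Hfac _ b Eb) as [bE HbE].
  destruct (split_ext_mono_iso Hs Hm HkE HbE) as [e' [_ He']].
  rewrite <- (comp_id_r f), <- (comp_id_r g), <- He', !comp_assoc, He. reflexivity.
Qed.

Lemma product_split_ext {P Q PQ : C} {p1 : hom PQ P} {p2 : hom PQ Q}
  {i1 : hom P PQ} {i2 : hom Q PQ} :
  is_product p1 p2 -> p1 ∘ i1 = idm P -> zm (p2 ∘ i1) -> zm (p1 ∘ i2) ->
  p2 ∘ i2 = idm Q -> split_ext i2 p1 i1.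
Proof.
  intros Hp H11 H21 H12 H22. split; auto. split; auto.
  intros Y y Hy. exists (p2 ∘ y). split.
  - apply (product_uniq Hp).
    + rewrite comp_assoc. apply zm_unique; auto. apply zm_comp_r; auto.
    + rewrite comp_assoc, H22, comp_id_l. reflexivity.
  - intros u' <-. rewrite comp_assoc, H22, comp_id_l. reflexivity.
Qed.

Lemma ext_mor_comp {X A B A' B' A'' B'' : C} {k : hom X A} {a : hom A B} {b : hom B A}
  {k' : hom X A'} {a' : hom A' B'} {b' : hom B' A'}
  {k'' : hom X A''} {a'' : hom A'' B''} {b'' : hom B'' A''}
  {v : hom A A'} {w : hom B B'} {v' : hom A' A''} {w' : hom B' B''} :
  ext_mor k a b k' a' b' v w -> ext_mor k' a' b' k'' a'' b'' v' w' ->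
  ext_mor k a b k'' a'' b'' (v' ∘ v) (w' ∘ w).
Proof.
  intros (E1 & E2 & E3) (F1 & F2 & F3). split; [|split].
  - rewrite <- comp_assoc, E1. exact F1.
  - rewrite comp_assoc, F2, <- comp_assoc, E2, comp_assoc. reflexivity.
  - rewrite <- comp_assoc, E3, comp_assoc, F3, comp_assoc. reflexivity.
Qed.

Lemma huq_commute_comp_l {P Q D E : C} {p : hom P D} {q : hom Q D} (c : hom D E) :
  huq_commute p q -> huq_commute (c ∘ p) (c ∘ q).
Proof.
  intros (PQ & p1 & p2 & i1 & i2 & φ & Hp & H11 & H21 & H12 & H22 & Hφ1 & Hφ2).
  exists PQ, p1, p2, i1, i2, (c ∘ φ).
  rewrite <- !comp_assoc, Hφ1, Hφ2. repeat split; auto.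
Qed.

Lemma huq_commute_precomp_r {P Q Q' D : C} (p : hom P D) (q : hom Q D) (h : hom Q' Q) :
  huq_commute p q -> huq_commute p (q ∘ h).
Proof.
  intros (PQ & p1 & p2 & i1 & i2 & φ & Hp & H11 & H21 & H12 & H22 & Hφ1 & Hφ2).
  destruct (product_with_injections HP HF P Q')
    as (PQ' & r1 & r2 & j1 & j2 & Hr & J11 & J21 & J12 & J22).
  destruct (Hp PQ' r1 (h ∘ r2)) as (θ & T1 & T2 & _).
  assert (Θ1 : θ ∘ j1 = i1).
  { apply (product_uniq Hp); rewrite comp_assoc.
    - rewrite T1, J11, H11. reflexivity.
    - rewrite T2, <- comp_assoc. apply zm_unique; auto. apply zm_comp_l; auto. }
  assert (Θ2 : θ ∘ j2 = i2 ∘ h).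
  { apply (product_uniq Hp); rewrite !comp_assoc.
    - rewrite T1. apply zm_unique; [exact J12 | apply zm_comp_r; exact H12].
    - rewrite T2, H22, <- comp_assoc, J22. comp_norm. reflexivity. }
  exists PQ', r1, r2, j1, j2, (φ ∘ θ). repeat split; auto.
  - rewrite <- comp_assoc, Θ1. exact Hφ1.
  - rewrite <- comp_assoc, Θ2, comp_assoc, Hφ2. reflexivity.
Qed.

Lemma huq_zero_iff_commute {P Q D : C} (p : hom P D) (q : hom Q D) :
  huq_zero p q <-> huq_commute p q.
Proof.
  split.
  - intros (Z & n & HZ & _ & Hq & _).
    specialize (Hq D (idm D)). rewrite !comp_id_l in Hq. apply Hq. split.
    + rewrite comp_id_l. apply zm_from_zero; auto.
    + intros Y g _. exists g. rewrite comp_id_r. split; auto.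
      intros u' Hu'. rewrite comp_id_r in Hu'. exact Hu'.
  - intros H. destruct HP as [Z HZ]. pose proof HZ as [HZi HZt].
    destruct (HZi D) as [n Hn]. exists Z, n. split; [|split; [|split]]; auto.
    + split.
      * intros x g h _. destruct (HZt x) as [y Hy]. rewrite (Hy g), (Hy h). reflexivity.
      * exists D, (idm D). split; [rewrite comp_id_l; apply zm_from_zero; auto|].
        intros Y g Hg. destruct (HZt Y) as [y Hy]. exists y. split; [|intros; apply Hy].
        apply zm_unique; [apply zm_comp_r, zm_from_zero; auto|].
        rewrite comp_id_l in Hg. exact Hg.
    + intros E c _. apply huq_commute_comp_l, H.
    + intros N' n' _ _. destruct (HZi N') as [h _]. exists h.
      rewrite (Hn (n' ∘ h)). symmetry. apply Hn.
Qed.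

Lemma idempotent_kernel_jointly_epic {G Z K : C} {s : hom G G} {k : hom K G} {f g : hom G Z} :
  s ∘ s = s -> is_kernel k s -> f ∘ k = g ∘ k -> f ∘ s = g ∘ s -> f = g.
Proof.
  intros Hss Hk Ek Es.
  destruct (equalizer_exists HF s (idm G)) as (I & σ & Hσs & Hσ & Hfac).
  destruct (Hfac G s) as [q Hq]; [rewrite Hss, comp_id_l; reflexivity|].
  assert (Hs : split_ext k q σ).
  { split; [apply Hσ; rewrite comp_assoc, Hq, Hσs; comp_norm; reflexivity|]. split.
    - apply (mono_zm HP Hσ). rewrite comp_assoc, Hq. apply Hk.
    - intros Y y Hy. apply Hk. rewrite <- Hq, <- comp_assoc. apply zm_comp_l, Hy. }
  apply (split_ext_jointly_epic Hs Ek).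
  rewrite <- (comp_id_l σ), <- Hσs, !comp_assoc, Es. reflexivity.
Qed.

End Protomodular.

Section Centralizer.
Variable C : Cat.
Hypotheses (HP : pointed C) (HF : finitely_complete C) (HPM : protomodular C).

Lemma split_ext_pullback {X A B S P : C} {k : hom X A} {a : hom A B} {b : hom B A}
  {f : hom S B} {pA : hom P A} {pS : hom P S} :
  split_ext k a b -> is_pullback pA pS a f ->
  exists (kP : hom X P) (σP : hom S P),
    split_ext kP pS σP /\ pA ∘ kP = k /\ pA ∘ σP = b ∘ f.
Proof.
  intros [Hab Hk] [EP HU].
  destruct (zm_exists HP X S) as [z Hz].
  destruct (HU X k z) as (kP & HkP1 & HkP2 & _).
  { apply zm_unique; [apply Hk | apply zm_comp_l, Hz]. }
  destruct (HU S (b ∘ f) (idm S)) as (σP & Hσ1 & Hσ2 & _).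
  { rewrite comp_assoc, Hab. comp_norm. reflexivity. }
  exists kP, σP. split; auto. split; auto. split; [rewrite HkP2; exact Hz|].
  intros Y y Hy. destruct (kernel_factor (g := pA ∘ y) Hk) as [u Hu].
  { rewrite comp_assoc, EP, <- comp_assoc. apply zm_comp_l, Hy. }
  assert (Hyu : kP ∘ u = y).
  { destruct (HU Y (pA ∘ y) (pS ∘ y)) as (u0 & _ & _ & Hu0).
    { rewrite !comp_assoc, EP. reflexivity. }
    rewrite (Hu0 y eq_refl eq_refl). apply Hu0; rewrite comp_assoc.
    - rewrite HkP1. exact Hu.
    - rewrite HkP2. apply zm_unique; [apply zm_comp_r, Hz | exact Hy]. }
  exists u. split; auto. intros u' Hu'. apply (kernel_mono Hk).
  rewrite <- HkP1, <- !comp_assoc, Hu', Hyu. reflexivity.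
Qed.

(* A commuting map [S × X -> A] is a morphism over [f] from the product extension;
   composed with [(v, w)] and compared by faithfulness with the morphism
   [(k' ∘ p2, 0)], it gives [w ∘ f = 0]. *)
Lemma huq_commute_faithful_zm {X A B A' B' S : C} {k : hom X A} {a : hom A B} {b : hom B A}
  {k' : hom X A'} {a' : hom A' B'} {b' : hom B' A'} {v : hom A A'} {w : hom B B'}
  {f : hom S B} :
  split_ext k a b -> faithful_split_ext k' a' b' -> ext_mor k a b k' a' b' v w ->
  huq_commute (b ∘ f) k -> zm (w ∘ f).
Proof.
  intros [Hab Hk] [[_ Hk'] Hfaith] Hvw
    (PQ & p1 & p2 & i1 & i2 & φ & Hp & H11 & H21 & H12 & H22 & Hφ1 & Hφ2).
  pose proof (product_split_ext Hp H11 H21 H12 H22) as Hsp.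
  assert (Hφ : ext_mor i2 p1 i1 k a b φ f).
  { split; [exact Hφ2 | split; [|exact Hφ1]].
    apply (split_ext_jointly_epic HF HPM Hsp); rewrite <- !comp_assoc.
    - rewrite Hφ2. apply zm_unique; [apply Hk | apply zm_comp_l, H12].
    - rewrite Hφ1, H11, comp_assoc, Hab. comp_norm. reflexivity. }
  destruct (zm_exists HP S B') as [z Hz].
  assert (H0 : ext_mor i2 p1 i1 k' a' b' (k' ∘ p2) z).
  { split; [|split].
    - rewrite <- comp_assoc, H22. apply comp_id_r.
    - apply zm_unique; [rewrite comp_assoc; apply zm_comp_r, Hk' | apply zm_comp_r, Hz].
    - apply zm_unique; [rewrite <- comp_assoc; apply zm_comp_l, H21 | apply zm_comp_l, Hz]. }
  destruct (Hfaith _ _ _ _ _ Hsp _ _ _ _ (ext_mor_comp Hφ Hvw) H0) as [_ ->].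
  exact Hz.
Qed.

(* If [w f = 0], the pullback of the extension along [f] is [X -> S × X -> S]:
   the retraction onto [X] is induced by [v], and protomodularity makes the
   comparison map an isomorphism. *)
Lemma zm_ext_mor_huq_commute {X A B A' B' S : C} {k : hom X A} {a : hom A B} {b : hom B A}
  {k' : hom X A'} {a' : hom A' B'} {b' : hom B' A'} {v : hom A A'} {w : hom B B'}
  {f : hom S B} :
  split_ext k a b -> split_ext k' a' b' -> ext_mor k a b k' a' b' v w ->
  zm (w ∘ f) -> huq_commute (b ∘ f) k.
Proof.
  intros Hs [_ Hk'] (Hv1 & Hv2 & Hv3) Hwf.
  destruct (proj2 HF A S B a f) as (P & pA & pS & HPB).
  destruct (split_ext_pullback Hs HPB) as (kP & σP & HsP & HkP & HσP).
  destruct (kernel_factor (g := v ∘ pA) Hk') as [r Hr].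
  { rewrite comp_assoc, Hv2, <- comp_assoc, (proj1 HPB), comp_assoc. apply zm_comp_r, Hwf. }
  assert (Hrk : r ∘ kP = idm X).
  { apply (kernel_mono Hk'). rewrite comp_assoc, Hr, <- comp_assoc, HkP, Hv1. comp_norm.
    reflexivity. }
  assert (Hrσ : zm (r ∘ σP)).
  { apply (mono_zm HP (kernel_mono Hk')).
    rewrite comp_assoc, Hr, <- comp_assoc, HσP, comp_assoc, Hv3, <- comp_assoc.
    apply zm_comp_l, Hwf. }
  destruct (product_with_injections HP HF S X)
    as (PQ & p1 & p2 & i1 & i2 & Hp & H11 & H21 & H12 & H22).
  destruct (Hp P pS r) as (θ & T1 & T2 & _).
  assert (Tk : θ ∘ kP = i2).
  { apply (product_uniq Hp); rewrite comp_assoc, ?T1, ?T2.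
    - apply zm_unique; [apply (proj2 HsP) | exact H12].
    - rewrite Hrk, H22. reflexivity. }
  assert (Tσ : θ ∘ σP = i1).
  { apply (product_uniq Hp); rewrite comp_assoc, ?T1, ?T2.
    - rewrite (proj1 HsP), H11. reflexivity.
    - apply zm_unique; [exact Hrσ | exact H21]. }
  destruct (HPM (u := idm X) (v := θ) (w := idm S) HsP (product_split_ext Hp H11 H21 H12 H22))
    as [θ' [Hθ _]]; comp_norm; auto using idm_iso.
  exists PQ, p1, p2, i1, i2, (pA ∘ θ'). repeat split; auto.
  - rewrite <- Tσ. comp_norm. comp_rewrite Hθ. exact HσP.
  - rewrite <- Tk. comp_norm. comp_rewrite Hθ. exact HkP.
Qed.

Hypothesis HAA : action_accessible C.

Lemma centralizer_as_kernel {X A B : C} {k : hom X A} {a : hom A B} {b : hom B A} :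
  split_ext k a b ->
  exists B' (w : hom B B'), forall S (f : hom S B), huq_commute (b ∘ f) k <-> zm (w ∘ f).
Proof.
  intros Hs. destruct (HAA Hs) as (A' & B' & k' & a' & b' & v & w & Hfaith & Hvw).
  exists B', w. intros S f. split.
  - exact (huq_commute_faithful_zm Hs Hfaith Hvw).
  - exact (zm_ext_mor_huq_commute Hs (proj1 Hfaith) Hvw).
Qed.

End Centralizer.

Section Restriction.
Variable C : Cat.
Hypotheses (HP : pointed C) (HF : finitely_complete C) (HPM : protomodular C).
Variables (X A B : C) (k : hom X A) (a : hom A B) (b : hom B A).
Hypotheses (Hab : a ∘ b = idm B) (Hk : is_kernel k a).
Variables (τX : hom X X) (τA : hom A A) (τB : hom B B).
Hypotheses (HτX : k ∘ τX = τA ∘ k) (HτB : b ∘ τB = τA ∘ b) (HτA : a ∘ τA = τB ∘ a).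
Variables (K : C) (κ : hom K X).
Hypothesis Hκ : is_kernel κ τX.

Lemma zm_endo_kernel : zm (τA ∘ (k ∘ κ)).
Proof. rewrite comp_assoc, <- HτX, <- comp_assoc. apply zm_comp_l, Hκ. Qed.

(* [A1] is the part of [A] that [τA] maps into [B]. *)
Variables (A1 : C) (e : hom A1 A) (k1 : hom K A1) (b1 : hom B A1).
Hypotheses (He : is_equalizer τA (b ∘ a ∘ τA) e) (Hk1 : e ∘ k1 = k ∘ κ) (Hb1 : e ∘ b1 = b).

Lemma restricted_split_ext : split_ext k1 (a ∘ e) b1.
Proof.
  destruct He as (Heq & Hm & _).
  split; [rewrite <- comp_assoc, Hb1; exact Hab|]. split.
  - rewrite <- comp_assoc, Hk1, comp_assoc. apply zm_comp_r, Hk.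
  - intros Y y Hy. destruct (kernel_factor (g := e ∘ y) Hk) as [u Hu].
    { rewrite comp_assoc. exact Hy. }
    destruct (kernel_factor (g := u) Hκ) as [u2 Hu2].
    { apply (mono_zm HP (kernel_mono Hk)).
      rewrite comp_assoc, HτX, <- comp_assoc, Hu, comp_assoc, Heq, <- (comp_assoc τA a b), HτA.
      rewrite <- !comp_assoc. apply zm_comp_l, zm_comp_l. rewrite comp_assoc. exact Hy. }
    assert (Hy2 : k1 ∘ u2 = y).
    { apply Hm. rewrite comp_assoc, Hk1, <- comp_assoc, Hu2. exact Hu. }
    exists u2. split; auto.
    intros u' Hu'. apply (kernel_mono Hκ), (kernel_mono Hk).
    rewrite !comp_assoc, <- Hk1, <- !comp_assoc, Hu', Hy2. reflexivity.
Qed.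

Lemma restricted_huq_commute_iff {S : C} (f : hom S B) :
  huq_commute (b ∘ f) (k ∘ κ) <-> huq_commute (b1 ∘ f) k1.
Proof.
  destruct He as (_ & Hm & Hfac). split.
  - intros (PQ & p1 & p2 & i1 & i2 & φ & Hp & H11 & H21 & H12 & H22 & Hφ1 & Hφ2).
    pose proof zm_endo_kernel as Zk.
    destruct (Hfac PQ φ) as [V HV].
    { apply (split_ext_jointly_epic HF HPM (product_split_ext Hp H11 H21 H12 H22));
        rewrite <- !comp_assoc.
      - rewrite Hφ2. apply zm_unique; [exact Zk | apply zm_comp_l, zm_comp_l, Zk].
      - rewrite Hφ1, !comp_assoc.
        do 2 comp_rewrite (eq_sym HτB). comp_rewrite Hab. reflexivity. }
    exists PQ, p1, p2, i1, i2, V. repeat split; auto; apply Hm; rewrite comp_assoc, HV.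
    + rewrite Hφ1, comp_assoc, Hb1. reflexivity.
    + rewrite Hφ2, Hk1. reflexivity.
  - intros H. rewrite <- Hb1, <- Hk1, <- comp_assoc. apply huq_commute_comp_l, H.
Qed.

End Restriction.

Lemma centralizer_of_endo_kernel {C : Cat} (HP : pointed C) (HF : finitely_complete C)
  (HPM : protomodular C) (HAA : action_accessible C)
  {X A B : C} {k : hom X A} {a : hom A B} {b : hom B A}
  {τX : hom X X} {τA : hom A A} {τB : hom B B} :
  a ∘ b = idm B -> is_kernel k a ->
  k ∘ τX = τA ∘ k -> b ∘ τB = τA ∘ b -> a ∘ τA = τB ∘ a ->
  forall K (κ : hom K X), is_kernel κ τX ->
  exists B' (w : hom B B'), forall S (f : hom S B),
    huq_commute (b ∘ f) (k ∘ κ) <-> zm (w ∘ f).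
Proof.
  intros Hab Hk HτX HτB HτA K κ Hκ.
  destruct (equalizer_exists HF τA (b ∘ a ∘ τA)) as (A1 & e & He).
  destruct (proj2 (proj2 He) _ b) as [b1 Hb1].
  { do 2 comp_rewrite (eq_sym HτB). comp_rewrite Hab. reflexivity. }
  destruct (proj2 (proj2 He) _ (k ∘ κ)) as [k1 Hk1].
  { pose proof (zm_endo_kernel HτX Hκ) as Zk.
    apply zm_unique; [exact Zk | rewrite <- comp_assoc; apply zm_comp_l, Zk]. }
  destruct (centralizer_as_kernel HP HF HPM HAA
              (restricted_split_ext HP Hab Hk HτX HτA Hκ He Hk1 Hb1)) as (B' & w & Hw).
  exists B', w. intros S f.
  rewrite (restricted_huq_commute_iff HF HPM Hab HτX HτB Hκ He Hk1 Hb1). apply Hw.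
Qed.

Section ReflexiveGraphs.
Variable C : Cat.

Lemma rg_s_idem (G : RG C) : rg_s G ∘ rg_s G = rg_s G.
Proof.
  transitivity (rg_s G ∘ (rg_t G ∘ rg_s G)); [rewrite rg_ts; reflexivity|].
  rewrite comp_assoc, rg_st. apply rg_ts.
Qed.

Lemma rg_t_idem (G : RG C) : rg_t G ∘ rg_t G = rg_t G.
Proof.
  transitivity (rg_t G ∘ (rg_s G ∘ rg_t G)); [rewrite rg_st; reflexivity|].
  rewrite comp_assoc, rg_ts. apply rg_st.
Qed.

Definition rg_id (G : RG C) : rgHom G G.
Proof. refine (@Build_rgHom C G G (idm _) _ _); comp_norm; reflexivity. Defined.

Definition rg_comp {G H K : RG C} (g : rgHom H K) (f : rgHom G H) : rgHom G K.
Proof.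
  refine (@Build_rgHom C G K (rgmap g ∘ rgmap f) _ _).
  - rewrite <- comp_assoc, (rgmap_s f), comp_assoc, (rgmap_s g), comp_assoc. reflexivity.
  - rewrite <- comp_assoc, (rgmap_t f), comp_assoc, (rgmap_t g), comp_assoc. reflexivity.
Defined.

Section SubGraph.
Variables (G : RG C) (M : C) (m : hom M (rg_ob G)) (sM tM : hom M M).
Hypotheses (Hm : mono m) (Hs : m ∘ sM = rg_s G ∘ m) (Ht : m ∘ tM = rg_t G ∘ m).

Lemma sub_rg_st : sM ∘ tM = tM.
Proof.
  apply Hm. rewrite comp_assoc, Hs, <- comp_assoc, Ht, comp_assoc, rg_st. reflexivity.
Qed.

Lemma sub_rg_ts : tM ∘ sM = sM.
Proof.
  apply Hm. rewrite comp_assoc, Ht, <- comp_assoc, Hs, comp_assoc, rg_ts. reflexivity.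
Qed.

Definition sub_rg : RG C := @Build_RG C M sM tM sub_rg_st sub_rg_ts.

Definition sub_rg_incl : rgHom sub_rg G := @Build_rgHom C sub_rg G m Hs Ht.

Lemma sub_rg_lift {Y : RG C} {g : rgHom Y G} {u : hom (rg_ob Y) M} :
  m ∘ u = g -> exists h : rgHom Y sub_rg, rgmap h = u.
Proof.
  intros Hu.
  assert (Hus : u ∘ rg_s Y = sM ∘ u).
  { apply Hm. rewrite comp_assoc, Hu, comp_assoc, Hs, <- comp_assoc, Hu. apply rgmap_s. }
  assert (Hut : u ∘ rg_t Y = tM ∘ u).
  { apply Hm. rewrite comp_assoc, Hu, comp_assoc, Ht, <- comp_assoc, Hu. apply rgmap_t. }
  exists (@Build_rgHom C Y sub_rg u Hus Hut). reflexivity.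
Qed.

End SubGraph.

Lemma rg_kernel_is_kernel (HP : pointed C) (HF : finitely_complete C)
  {X A B : RG C} {k : rgHom X A} {a : rgHom A B} :
  rg_kernel k a -> is_kernel (rgmap k) (rgmap a).
Proof.
  intros [Hz Huniv].
  destruct (kernel_exists HP HF (rgmap a)) as (K & κ & Hκ).
  destruct (kernel_factor (g := rg_s A ∘ κ) Hκ) as [sK HsK].
  { rewrite comp_assoc, (rgmap_s a), <- comp_assoc. apply zm_comp_l, Hκ. }
  destruct (kernel_factor (g := rg_t A ∘ κ) Hκ) as [tK HtK].
  { rewrite comp_assoc, (rgmap_t a), <- comp_assoc. apply zm_comp_l, Hκ. }
  pose proof (kernel_mono Hκ) as Hκm.
  destruct (Huniv _ (sub_rg_incl Hκm HsK HtK) (proj1 Hκ)) as [u [Hu _]].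
  destruct (kernel_factor Hκ Hz) as [v Hv].
  destruct (sub_rg_lift Hκm HsK HtK Hv) as [vR HvR].
  destruct (Huniv X k Hz) as [u0 [_ Hu0]].
  assert (Huv : rgmap u ∘ v = idm (rg_ob X)).
  { transitivity (rgmap u0).
    - rewrite <- HvR. apply (Hu0 (rg_comp u vR)).
      change (rgmap k ∘ (rgmap u ∘ rgmap vR) = rgmap k).
      rewrite comp_assoc, Hu, HvR. exact Hv.
    - symmetry. apply (Hu0 (rg_id X)). apply comp_id_r. }
  assert (Hkm : mono (rgmap k)).
  { intros x g h E.
    rewrite <- (comp_id_l g), <- (comp_id_l h), <- Huv, <- !comp_assoc. f_equal.
    apply Hκm. rewrite !comp_assoc. change (κ ∘ v ∘ g = κ ∘ v ∘ h). rewrite Hv. exact E. }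
  split; [exact Hz|]. intros Y g Hg. destruct (kernel_factor Hκ Hg) as [g0 Hg0].
  exists (rgmap u ∘ g0). split.
  - rewrite comp_assoc, Hu. exact Hg0.
  - intros u' Hu'. apply Hkm. rewrite Hu', comp_assoc, Hu. symmetry. exact Hg0.
Qed.

Lemma rg_joint_equalizer_exists (HF : finitely_complete C) {B : RG C} {B1 B2 : C}
  (w1 : hom (rg_ob B) B1) (w2 : hom (rg_ob B) B2) :
  exists (Bt : RG C) (m : rgHom Bt B),
    rg_mono m /\ w1 ∘ m = w1 ∘ rg_s B ∘ m /\ w2 ∘ m = w2 ∘ rg_t B ∘ m /\
    forall (G : RG C) (g : rgHom G B),
      w1 ∘ g = w1 ∘ rg_s B ∘ g -> w2 ∘ g = w2 ∘ rg_t B ∘ g ->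
      exists h : rgHom G Bt, rgmap m ∘ rgmap h = rgmap g.
Proof.
  destruct (joint_equalizer_exists HF w1 (w1 ∘ rg_s B) w2 (w2 ∘ rg_t B))
    as (E & m & Hm & Em1 & Em2 & Hfac).
  destruct (Hfac _ (rg_s B ∘ m)) as [sE HsE].
  { comp_norm. comp_rewrite (rg_s_idem B). reflexivity. }
  { comp_norm. comp_rewrite (rg_ts B). reflexivity. }
  destruct (Hfac _ (rg_t B ∘ m)) as [tE HtE].
  { comp_norm. comp_rewrite (rg_st B). reflexivity. }
  { comp_norm. comp_rewrite (rg_t_idem B). reflexivity. }
  exists (sub_rg Hm HsE HtE), (sub_rg_incl Hm HsE HtE).
  split; [intros Y g h Hgh; exact (Hm _ _ _ Hgh)|]. split; [exact Em1|]. split; [exact Em2|].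
  intros G g G1 G2. destruct (Hfac _ _ G1 G2) as [u Hu].
  destruct (sub_rg_lift Hm HsE HtE Hu) as [h Hh].
  exists h. rewrite Hh. exact Hu.
Qed.

End ReflexiveGraphs.

Section CommutatorConditions.
Variable C : Cat.
Hypotheses (HP : pointed C) (HF : finitely_complete C) (HPM : protomodular C).

Lemma kernel_zm_iff_eq {G B B' K : C} {g : hom G B} {σG : hom G G} {σB : hom B B}
  (w : hom B B') {k1 : hom K G} :
  σB ∘ σB = σB -> σG ∘ σG = σG -> g ∘ σG = σB ∘ g -> is_kernel k1 σG ->
  zm (w ∘ g ∘ k1) <-> w ∘ g = w ∘ σB ∘ g.
Proof.
  intros HσB HσG Hg Hk1.
  assert (Z : zm (w ∘ σB ∘ g ∘ k1)).
  { rewrite <- !comp_assoc, (comp_assoc k1 g σB), <- Hg, <- (comp_assoc k1 σG g).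
    apply zm_comp_l, zm_comp_l, Hk1. }
  split.
  - intros Hz. apply (idempotent_kernel_jointly_epic HP HF HPM HσG Hk1).
    + exact (zm_unique Hz Z).
    + rewrite <- !comp_assoc, Hg, !comp_assoc. comp_rewrite HσB. reflexivity.
  - intros ->. exact Z.
Qed.

Lemma huq_zero_kernels_iff {X A B B' K G : C} {k : hom X A} {b : hom B A} {w : hom B B'}
  {κ : hom K X} {τX : hom X X} {σB : hom B B} {g : hom G B} {σG : hom G G} :
  is_kernel κ τX ->
  (forall S (f : hom S B), huq_commute (b ∘ f) (k ∘ κ) <-> zm (w ∘ f)) ->
  σB ∘ σB = σB -> σG ∘ σG = σG -> g ∘ σG = σB ∘ g ->
  (forall (K1 K2 : C) (k1 : hom K1 G) (k2 : hom K2 X),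
     is_kernel k1 σG -> is_kernel k2 τX -> huq_zero (b ∘ g ∘ k1) (k ∘ k2))
  <-> w ∘ g = w ∘ σB ∘ g.
Proof.
  intros Hκ Hw HσB HσG Hg. split.
  - intros H. destruct (kernel_exists HP HF σG) as (K1 & k1 & Hk1).
    apply (kernel_zm_iff_eq w HσB HσG Hg Hk1).
    rewrite <- comp_assoc. apply Hw. rewrite comp_assoc.
    apply (huq_zero_iff_commute HP), H; assumption.
  - intros E K1 K2 k1 k2 Hk1 Hk2.
    destruct (kernel_factor Hκ (proj1 Hk2)) as [h <-].
    apply (huq_zero_iff_commute HP). rewrite comp_assoc.
    apply (huq_commute_precomp_r HP HF). rewrite <- comp_assoc. apply Hw.
    rewrite comp_assoc. apply (kernel_zm_iff_eq w HσB HσG Hg Hk1). exact E.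
Qed.

End CommutatorConditions.

Theorem lemma2p2 (C : Cat) (HC : semi_abelian C) (HAA : action_accessible C)
  (X A B : RG C) (k : rgHom X A) (a : rgHom A B) (b : rgHom B A)
  (HE : rg_split_ext k a b) :
  exists (Bt : RG C) (m : rgHom Bt B),
    rg_mono m /\ comm_condition k b m /\
    forall (Bt' : RG C) (m' : rgHom Bt' B),
      rg_mono m' -> comm_condition k b m' ->
      exists h : rgHom Bt' Bt, rgmap m ∘ rgmap h = rgmap m'.
Proof.
  destruct HC as (HP & HF & _ & _ & HPM). destruct HE as [Hab Hrk].
  pose proof (rg_kernel_is_kernel HP HF Hrk) as Hk.
  destruct (kernel_exists HP HF (rg_t X)) as (Kt & κt & Hκt).
  destruct (kernel_exists HP HF (rg_s X)) as (Ks & κs & Hκs).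
  destruct (centralizer_of_endo_kernel HP HF HPM HAA Hab Hk
              (rgmap_t k) (rgmap_t b) (rgmap_t a) Hκt) as (B1 & w1 & Hw1).
  destruct (centralizer_of_endo_kernel HP HF HPM HAA Hab Hk
              (rgmap_s k) (rgmap_s b) (rgmap_s a) Hκs) as (B2 & w2 & Hw2).
  assert (Hcond : forall (G : RG C) (g : rgHom G B), comm_condition k b g <->
            w1 ∘ g = w1 ∘ rg_s B ∘ g /\ w2 ∘ g = w2 ∘ rg_t B ∘ g).
  { intros G g. unfold comm_condition.
    rewrite (huq_zero_kernels_iff HP HF HPM Hκt Hw1 (rg_s_idem B) (rg_s_idem G) (rgmap_s g)),
            (huq_zero_kernels_iff HP HF HPM Hκs Hw2 (rg_t_idem B) (rg_t_idem G) (rgmap_t g)).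
    reflexivity. }
  destruct (rg_joint_equalizer_exists HF w1 w2) as (Bt & m & Hm & Em1 & Em2 & Huniv).
  exists Bt, m. split; [exact Hm | split].
  - apply Hcond. split; assumption.
  - intros Bt' m' _ Hc. apply Hcond in Hc as [G1 G2]. exact (Huniv _ _ G1 G2).
Qed.
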